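(* For every $\rho\in\mathbb N$ there exist $\mu,n_0\in\mathbb N$ such that for every upwards closed quasi-bush $B=(T,D,\lambda)$ with no coat hangers and with $n\ge n_0$ leaves, if $\mathrm{wcol}_\mu(B)\le n^{1/\mu}$ and for every $w\in V(T)$ either $|\mathrm{IN}(w,B)|\le n^{1/\mu}$ or $|\mathrm{OUT}(w,B)|\le n^{1/\mu}$, then $\mathrm{wcol}_\rho(G(B))\le n^{1/\rho}$.
   Context: A quasi-bush $B=(T,D,\lambda)$: a rooted tree $T$, a set $D$ of pointers from leaves of $T$ to nodes of $T$ (every leaf points to the root), and $\lambda\colon D\to\{0,1\}$. $v\le_T w$ means $v$ is an ancestor of $w$ (including $v=w$); $T(a)$ is the subtree of descendants of $a$. $G(B)$ is the directed graph on the leaves of $T$ where, for distinct leaves $u,v$ and $w$ the lowest ancestor of $v$ with $(u,w)\in D$, $(u,v)$ is an arc iff $\lambda((u,w))=1$; $w$ is the connection point of $(u,v)$. Quasi-bushes are assumed to represent undirected graphs ($G(B)$ symmetric), and $G(B)$ is identified with the corresponding undirected graph. $B$ is upwards closed if $(u,w)\in D$ and $w'\le_T w$ imply $(u,w')\in D$. A coat hanger is a subtree $T(a)$ such that $a$ is neither the root nor a leaf, and some leaf $v$ has a pointer labeled $1$ to the parent of $a$ but no pointer to any node of $T(a)$. $\mathrm{IN}(w,B)$ (resp. $\mathrm{OUT}(w,B)$) is the set of all $u$ (resp. $v$) such that $w$ is the connection point of some arc $(u,v)$ of $G(B)$. $\mathrm{wcol}_r(H)$ is the minimum over linear orders $\prec$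 of the maximum over $v$ of the number of $u$ such that some path of length at most $r$ from $v$ to $u$ has $u$ as its $\prec$-minimum; $\mathrm{wcol}_\mu(B)$ refers to the Gaifman graph of $B$ (vertex set $V(T)$, edges the tree edges and pointers). *)

From mathcomp Require Import all_boot.
Set Implicit Arguments. Unset Strict Implicit. Unset Printing Implicit Defensive.

(* A linear order on W is given by an injective rank W -> 'I_#|W|.    *)
(* u is weakly r-reachable from v (w.r.t. rank) if some walk of length *)
(* at most r from v to u has u as its rank-minimum.  (Walks and paths  *)
(* give the same reachability relation.)                               *)
Section WCol.
Variables (W : finType) (e : rel W).

Definition wreach (rank : W -> nat) (r : nat) (v u : W) : bool :=
  [exists k : 'I_r.+1, exists p : k.-tuple W,
     [&& path e v p, last v p == u & all (fun x => rank u <= rank x) (v :: p)]].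

Definition wcol_of_order (rank : W -> nat) (r : nat) : nat :=
  \max_(v : W) #|[set u | wreach rank r v u]|.

(* minimum over all linear orders; #|W| is an upper bound of every cost *)
Definition wcol (r : nat) : nat :=
  \big[minn/#|W|]_(f : {ffun W -> 'I_#|W|} | injectiveb f)
     wcol_of_order (fun x => nat_of_ord (f x)) r.
End WCol.

(* Quasi-bushes.  The rooted tree T on node type V is given by a root  *)
(* and a parent function (par root = root, every node reaches root).   *)
Record qbush (V : finType) := QBush {
  qroot : V;
  qpar  : V -> V;
  qptr  : rel V;            (* (u, w) \in D *)
  qlab  : V -> V -> bool    (* lambda((u, w)) *)
}.

Section QBush.
Variables (V : finType) (B : qbush V).

(* anc v w : v <=_T w, i.e. v is an ancestor of w (including v = w) *)
Definition anc (v w : V) : bool :=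
  [exists k : 'I_#|V|.+1, iter k (qpar B) w == v].

Definition child (a x : V) : bool := (x != qroot B) && (qpar B x == a).

Definition leaf (v : V) : bool := [forall x, ~~ child v x].

Definition is_qbush : Prop :=
  [/\ qpar B (qroot B) = qroot B,
      (forall x, anc (qroot B) x),
      (forall u w, qptr B u w -> leaf u) &
      (forall u, leaf u -> qptr B u (qroot B))].

Definition conn (u v w : V) : bool :=
  [&& anc w v, qptr B u w &
      [forall w', (anc w' v && qptr B u w') ==> anc w' w]].

Definition arc (u v : V) : bool :=
  [&& leaf u, leaf v, u != v & [exists w, conn u v w && qlab B u w]].

(* G(B) represents an undirected graph *)
Definition symmetric_qbush : Prop := forall u v, arc u v = arc v u.

Definition upwards_closed : Prop :=
  forall u w w', qptr B u w -> anc w' w -> qptr B u w'.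

Definition coat_hanger (a : V) : bool :=
  [&& a != qroot B, ~~ leaf a &
      [exists v, [&& qptr B v (qpar B a), qlab B v (qpar B a) &
                     [forall w, anc a w ==> ~~ qptr B v w]]]].

Definition no_coat_hangers : Prop := forall a, ~~ coat_hanger a.

Definition IN (w : V) : {set V} := [set u | [exists v, arc u v && conn u v w]].
Definition OUT (w : V) : {set V} := [set v | [exists u, arc u v && conn u v w]].

Definition leaves : {set V} := [set v | leaf v].

Definition gaif_edge (x y : V) : bool :=
  (x != y) && [|| (x != qroot B) && (qpar B x == y),
                  (y != qroot B) && (qpar B y == x),
                  qptr B x y | qptr B y x].

Definition wcol_qbush (r : nat) : nat := wcol gaif_edge r.

Definition leafT := {x : V | leaf x}.
Definition GB_edge (x y : leafT) : bool := arc (val x) (val y).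

Definition wcol_GB (r : nat) : nat := wcol GB_edge r.
End QBush.

(* Let L be a linear order of V witnessing wcol_mu(B) and let S w be whichever
   of IN(w,B), OUT(w,B) is small.  Since B is upwards closed and has no coat
   hangers, the connection point of an arc (x, y) of G(B) is y or the parent of
   y, so every arc is a Gaifman path of length at most two whose middle node w
   satisfies x \in S w or y \in S w.  Anchor each leaf x at the L-least node
   among x and its Gaifman neighbours w with x \in S w, and order the leaves by
   the L-rank of their anchors: a walk witnessing weak rho-reachability of u
   from v in G(B) then lifts to a Gaifman walk of length at most 2 rho + 1
   witnessing weak mu-reachability of the anchor w of u from v, and u lies in
   {w} \cup S w.  Hence wcol_rho(G(B)) <= g (c + 1) with g = wcol_mu(B) and
   c = max |S w|, and mu = 4 rho + 1 turns g^mu, c^mu <= n into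
   (g (c + 1))^rho <= n. *)

From mathcomp Require Import all_boot all_order zify.
Set Implicit Arguments. Unset Strict Implicit. Unset Printing Implicit Defensive.
Import Order.TTheory.

Section WColTheory.
Variables (W : finType) (e : rel W).

Lemma wreachP (rank : W -> nat) r v u :
  reflect (exists2 p : seq W, size p <= r &
             [&& path e v p, last v p == u & all (fun x => rank u <= rank x) (v :: p)])
          (wreach e rank r v u).
Proof.
apply: (iffP existsP) => [[k /existsP[p Hp]] | [p Hpr Hp]].
  by exists p => //; rewrite size_tuple -ltnS.
by exists (Ordinal (Hpr : size p < r.+1)); apply/existsP; exists (in_tuple p).
Qed.

Lemma wcol_le_of_order (f : {ffun W -> 'I_#|W|}) r :
  injective f -> wcol e r <= wcol_of_order e (fun x => nat_of_ord (f x)) r.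
Proof.
move=> /injectiveP f_inj; rewrite /wcol -minEnat.
exact: (bigmin_le_cond _ (P := fun g : {ffun W -> 'I_#|W|} => injectiveb g)
          (fun g : {ffun W -> 'I_#|W|} => wcol_of_order e (fun x => nat_of_ord (g x)) r)
          f_inj).
Qed.

Lemma wcol_attained r : exists2 f : {ffun W -> 'I_#|W|},
  injective f & wcol e r = wcol_of_order e (fun x => nat_of_ord (f x)) r.
Proof.
pose cost (f : {ffun W -> 'I_#|W|}) := wcol_of_order e (fun x => nat_of_ord (f x)) r.
pose f0 : {ffun W -> 'I_#|W|} := [ffun x => enum_rank x].
have f0_inj : injectiveb f0 by apply/injectiveP => x y; rewrite !ffunE => /enum_rank_inj.
have cost_le f : cost f <= #|W| by apply/bigmax_leqP => v _; apply: max_card.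
have [f /injectiveP f_inj] :=
  eq_bigmin f0 (fun f => injectiveb f) cost f0_inj (fun f _ => cost_le f).
by rewrite /wcol -minEnat; exists f.
Qed.

End WColTheory.

Lemma exists_rank_le (T : finType) (h : T -> nat) :
  exists2 f : {ffun T -> 'I_#|T|}, injective f & forall x y, f x <= f y -> h x <= h y.
Proof.
pose s := sort (relpre h leq) (enum T).
have s_perm : perm_eq s (enum T) by rewrite /s perm_sort.
have mem_s x : x \in s by rewrite (perm_mem s_perm) mem_enum.
have index_lt x : index x s < #|T| by rewrite cardE -(perm_size s_perm) index_mem.
exists [ffun x => Ordinal (index_lt x)] => [x y | x y]; rewrite !ffunE.
  by move=> /(congr1 val) /=; apply: index_inj.
have s_sorted : sorted (relpre h leq) s by apply: sort_sorted => a b; apply: leq_total.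
have le_trans : transitive (relpre h leq) by move=> a b c; apply: leq_trans.
exact: (sorted_leq_index le_trans (fun a => leqnn (h a)) s_sorted
          _ _ (mem_s x) (mem_s y)).
Qed.

Lemma card_bigcup_le (I T : finType) (P : {pred I}) (F : I -> {set T}) :
  #|\bigcup_(i in P) F i| <= \sum_(i in P) #|F i|.
Proof.
elim/big_rec2: _ => [|i U n _ le_Un]; first by rewrite cards0.
by rewrite (leq_trans (leq_card_setU _ _).1) ?leq_add2l.
Qed.

Section Tree.
Variables (V : finType) (B : qbush V).
Hypothesis B_qbush : is_qbush B.
Local Notation par := (qpar B).
Local Notation root := (qroot B).

Lemma anc_refl x : anc B x x.
Proof. by apply/existsP; exists ord0. Qed.

Lemma par_root : par root = root.
Proof. by case: B_qbush. Qed.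

Lemma iter_par_root k : iter k par root = root.
Proof. by elim: k => //= k ->; apply: par_root. Qed.

Lemma anc_par_eq_root a : anc B a (par a) -> a = root.
Proof.
case/existsP=> k /eqP; rewrite -iterSr => cycle_a.
case: B_qbush => _ /(_ a) /existsP[m /eqP root_a] _ _.
have iter_cycle t : iter (k.+1 * t) par a = a.
  by elim: t => [|t IHt]; rewrite ?muln0 // mulnS iterD IHt.
rewrite -(iter_cycle m) -(subnK (leq_pmull m (ltn0Sn k))) iterD root_a.
exact: iter_par_root.
Qed.

Lemma par_neq x : x != root -> par x != x.
Proof.
apply: contraNneq => par_x; apply/eqP/anc_par_eq_root.
by rewrite par_x anc_refl.
Qed.

Lemma anc_child w y : anc B w y -> w != y -> exists2 a, child B w a & anc B a y.
Proof.
case/existsP=> k /eqP iter_k w_neq_y.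
have ex_j : exists j, iter j par y == w by exists k; apply/eqP.
case: (ex_minnP ex_j) => j /eqP iter_j j_min.
case: j iter_j j_min => [|j] iter_j j_min; first by rewrite -iter_j eqxx in w_neq_y.
have jk : j < #|V|.+1 by apply: ltn_trans (j_min k _) (ltn_ord k); rewrite iter_k.
exists (iter j par y); last by apply/existsP; exists (Ordinal jk).
rewrite /child -iter_j eqxx andbT; apply/eqP => iter_root.
by have := j_min j; rewrite -iter_j /= iter_root par_root eqxx ltnn => /(_ isT).
Qed.

Lemma leaf_anc_eq a y : leaf B a -> anc B a y -> a = y.
Proof.
move=> /forallP leaf_a anc_ay; case: (eqVneq a y) => // a_neq_y.
by case: (anc_child anc_ay a_neq_y) => b child_ab _; have := leaf_a b; rewrite child_ab.
Qed.

Lemma root_nleaf : 1 < #|leaves B| -> ~~ leaf B root.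
Proof.
case/card_gt1P=> x [y [_ _ x_neq_y]].
have [z z_neq_root] : exists z, z != root.
  by case: (eqVneq x root) => [x_root|]; [exists y; rewrite -x_root eq_sym | exists x].
case: B_qbush => _ /(_ z) anc_root _ _.
have root_neq_z : root != z by rewrite eq_sym.
have [a child_ra _] := anc_child anc_root root_neq_z.
by apply/forallP => /(_ a); rewrite child_ra.
Qed.

Lemma arc_conn_par x y w :
  upwards_closed B -> no_coat_hangers B ->
  conn B x y w -> qlab B x w -> w = y \/ w = par y.
Proof.
move=> B_uc B_nch /and3P[anc_wy ptr_xw /forallP lowest] lab_xw.
case: (eqVneq w y) => [|w_neq_y]; [by left | right].
have [a /andP[a_neq_root /eqP par_a] anc_ay] := anc_child anc_wy w_neq_y.
case leaf_a: (leaf B a); first by rewrite -(leaf_anc_eq leaf_a anc_ay) par_a.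
have no_ptr_below z : anc B a z -> ~~ qptr B x z.
  apply: contraTN => ptr_xz; apply/negP => anc_az.
  have := lowest a; rewrite anc_ay (B_uc _ _ _ ptr_xz anc_az) /= -par_a.
  by move/anc_par_eq_root/eqP; rewrite (negbTE a_neq_root).
have := B_nch a; rewrite /coat_hanger a_neq_root leaf_a /=.
move/existsPn => /(_ x); rewrite par_a ptr_xw lab_xw /=.
by case/negP; apply/forallP => z; apply/implyP/no_ptr_below.
Qed.

End Tree.

Section Gaifman.
Variables (V : finType) (B : qbush V).
Local Notation par := (qpar B).
Local Notation root := (qroot B).

Lemma gaif_edgeC x y : gaif_edge B x y = gaif_edge B y x.
Proof.
rewrite /gaif_edge eq_sym; congr andb.
by case: (_ && (_ == y)); case: (_ && (_ == x)); case: (qptr _ x y); case: (qptr _ y x).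
Qed.

Lemma gaif_edge_ptr x w : x != w -> qptr B x w -> gaif_edge B x w.
Proof. by move=> x_neq_w ptr_xw; rewrite /gaif_edge x_neq_w ptr_xw !orbT. Qed.

Hypothesis B_qbush : is_qbush B.

Lemma gaif_edge_par y : y != root -> gaif_edge B (par y) y.
Proof.
move=> y_neq_root.
by rewrite /gaif_edge (par_neq B_qbush y_neq_root) y_neq_root eqxx orbT.
Qed.

Hypotheses (B_uc : upwards_closed B) (B_nch : no_coat_hangers B).
Hypothesis nleaf_root : ~~ leaf B root.

Lemma arc_detour x y : arc B x y -> ~~ gaif_edge B x y ->
  [/\ conn B x y (par y), gaif_edge B x (par y) & gaif_edge B (par y) y].
Proof.
case/and4P=> leaf_x leaf_y x_neq_y /existsP[w /andP[conn_w lab_w]] not_adj.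
have y_neq_root : y != root by apply: contraNneq nleaf_root => <-.
have ptr_xw : qptr B x w by case/and3P: conn_w.
case: (arc_conn_par B_qbush B_uc B_nch conn_w lab_w) => w_eq; subst w.
  by rewrite (gaif_edge_ptr x_neq_y ptr_xw) in not_adj.
have x_neq_par : x != par y.
  apply: contraTneq leaf_x => ->; apply/forallPn; exists y.
  by rewrite negbK /child y_neq_root eqxx.
by split; [| apply: gaif_edge_ptr | apply: gaif_edge_par].
Qed.

End Gaifman.

Section Anchor.
Variables (V : finType) (B : qbush V).
Hypotheses (B_qbush : is_qbush B) (B_uc : upwards_closed B) (B_nch : no_coat_hangers B).
Hypothesis nleaf_root : ~~ leaf B (qroot B).
Variable S : V -> {set V}.
Hypothesis S_IN_OUT : forall w, S w = IN B w \/ S w = OUT B w.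
Variable L : V -> nat.
Local Notation par := (qpar B).

Definition anchor_cand (x : leafT B) (w : V) : bool :=
  (w == val x) || (val x \in S w) && gaif_edge B (val x) w.

Definition anchor (x : leafT B) : V := [arg min_(w < val x | anchor_cand x w) L w].

Lemma anchorP x :
  anchor_cand x (anchor x) /\ forall w, anchor_cand x w -> L (anchor x) <= L w.
Proof. by rewrite /anchor; case: arg_minnP; [rewrite /anchor_cand eqxx | split]. Qed.

Lemma anchor_le x : L (anchor x) <= L (val x).
Proof. by apply: (anchorP x).2; rewrite /anchor_cand eqxx. Qed.

Lemma anchor_le_detour x y : GB_edge x y -> ~~ gaif_edge B (val x) (val y) ->
  minn (L (anchor x)) (L (anchor y)) <= L (par (val y)).
Proof.
move=> xy not_adj.
have [conn_xy adj_x adj_y] := arc_detour B_qbush B_uc B_nch nleaf_root xy not_adj.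
case: (S_IN_OUT (par (val y))) => S_eq.
  have x_in : val x \in S (par (val y)).
    by rewrite S_eq inE; apply/existsP; exists (val y); apply/andP.
  by rewrite geq_min (anchorP x).2 // /anchor_cand x_in adj_x orbT.
have y_in : val y \in S (par (val y)).
  by rewrite S_eq inE; apply/existsP; exists (val x); apply/andP.
by rewrite geq_min (anchorP y).2 ?orbT // /anchor_cand y_in gaif_edgeC adj_y orbT.
Qed.

Fixpoint lift_walk (x : leafT B) (p : seq (leafT B)) : seq V :=
  if p is y :: p' then
    (if gaif_edge B (val x) (val y) then [:: val y] else [:: par (val y); val y])
      ++ lift_walk y p'
  else [::].

Lemma lift_walk_path x p :
  path (@GB_edge V B) x p -> path (gaif_edge B) (val x) (lift_walk x p).
Proof.
elim: p x => //= y p IHp x /andP[xy path_p].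
case: ifP => adj; rewrite cat_path /= ?adj IHp //.
by case: (arc_detour B_qbush B_uc B_nch nleaf_root xy (negbT adj)) => _ -> ->.
Qed.

Lemma last_lift_walk x p : last (val x) (lift_walk x p) = val (last x p).
Proof. by elim: p x => //= y p IHp x; case: ifP => _; rewrite last_cat IHp. Qed.

Lemma size_lift_walk x p : size (lift_walk x p) <= (size p).*2.
Proof.
elim: p x => //= y p IHp x; rewrite size_cat doubleS.
by case: ifP => _ /=; rewrite ?add1n ?add2n !ltnS ?leqW.
Qed.

Lemma lift_walk_above b x p : path (@GB_edge V B) x p ->
  all (fun y => b <= L (anchor y)) (x :: p) -> all (fun z => b <= L z) (lift_walk x p).
Proof.
elim: p x => //= y p IHp x /andP[xy path_p] /and3P[b_x b_y b_p].
rewrite all_cat IHp ?b_y // andbT.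
have b_val_y : b <= L (val y) := leq_trans b_y (anchor_le y).
case: ifP => adj /=; rewrite b_val_y ?andbT //.
by rewrite (leq_trans _ (anchor_le_detour xy (negbT adj))) // leq_min b_x.
Qed.

Lemma wreach_anchor rho mu (r : leafT B -> nat) v u : rho.*2 < mu ->
  (forall x, r u <= r x -> L (anchor u) <= L (anchor x)) ->
  wreach (@GB_edge V B) r rho v u -> wreach (gaif_edge B) L mu (val v) (anchor u).
Proof.
move=> rho_mu r_anchor /wreachP[p size_p /and3P[path_p /eqP last_p all_p]].
have above_u : all (fun y => L (anchor u) <= L (anchor y)) (v :: p).
  by apply/allP => y /(allP all_p) /r_anchor.
have last_walk : last (val v) (lift_walk v p) = val u by rewrite last_lift_walk last_p.
have [cand_u _] := anchorP u.
apply/wreachP.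
exists (lift_walk v p ++ (if anchor u == val u then [::] else [:: anchor u])).
  rewrite size_cat; apply: leq_trans rho_mu; rewrite -addn1 leq_add //.
    by apply: leq_trans (size_lift_walk v p) _; rewrite leq_double.
  by case: ifP.
rewrite cat_path last_cat lift_walk_path // last_walk /= all_cat lift_walk_above //.
rewrite (leq_trans (allP above_u v (mem_head _ _)) (anchor_le v)) /=.
case: ifPn => [/eqP -> /= | not_u]; first by rewrite eqxx.
rewrite /= leqnn eqxx !andbT.
by move: cand_u; rewrite /anchor_cand (negbTE not_u) => /andP[].
Qed.

Lemma val_in_anchor_side u : val u \in anchor u |: S (anchor u).
Proof.
case/orP: (anchorP u).1 => [/eqP <- | /andP[u_in _]]; first exact: setU11.
by rewrite setU1r.
Qed.

Lemma card_wreach_GB rho mu (r : leafT B -> nat) v : rho.*2 < mu ->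
  (forall u x, r u <= r x -> L (anchor u) <= L (anchor x)) ->
  #|[set u | wreach (@GB_edge V B) r rho v u]|
    <= #|[set w | wreach (gaif_edge B) L mu (val v) w]| * (\max_w #|S w|).+1.
Proof.
move=> rho_mu r_anchor; set T := [set w | wreach (gaif_edge B) _ _ _ w].
rewrite -(card_imset _ val_inj).
have sub_cover : val @: [set u | wreach (@GB_edge V B) r rho v u]
    \subset \bigcup_(w in T) (w |: S w).
  apply/subsetP => y /imsetP[u]; rewrite inE => reach_u ->.
  apply/bigcupP; exists (anchor u); last exact: val_in_anchor_side.
  by rewrite inE (wreach_anchor rho_mu (r_anchor u) reach_u).
apply: leq_trans (subset_leq_card sub_cover) _.
apply: leq_trans (card_bigcup_le _ _) _; rewrite -sum_nat_const leq_sum // => w _.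
by rewrite cardsU1 -add1n leq_add ?leq_b1 ?(leq_bigmax w).
Qed.

End Anchor.

(* x <= 2 (max g c)^2, hence x^(2 r) <= 4^r (max g c)^(4 r) <= n^2. *)
Lemma leq_expn_mulS r x g c n : x <= g * c.+1 ->
  4 ^ r <= n -> g ^ (4 * r).+1 <= n -> c ^ (4 * r).+1 <= n -> x ^ r <= n.
Proof.
move=> x_le four_n g_n c_n; have [r_eq0 | r_gt0] := posnP r.
  by move: four_n; rewrite r_eq0.
pose M := maxn g c.
have M_n : M ^ (4 * r) <= n.
  have [M_eq0 | M_gt0] := posnP M; first by rewrite M_eq0 exp0n // muln_gt0 r_gt0.
  apply: leq_trans (leq_pexp2l M_gt0 (leqnSn _)) _.
  by rewrite /M /maxn; case: ifP.
have x_M : x <= 2 * M ^ 2.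
  by have := leq_maxl g c; have := leq_maxr g c; rewrite -/M; nia.
apply: leq_trans (_ : (2 * M ^ 2) ^ r <= n); first by rewrite leq_exp2r.
have sqr_eq : ((2 * M ^ 2) ^ r) ^ 2 = 4 ^ r * M ^ (4 * r).
  by rewrite -expnM expnMn -expnM [r * 2]mulnC expnM mulnA.
by rewrite -leq_sqr sqr_eq -mulnn leq_mul.
Qed.

Theorem lemma7p36 :
  forall rho : nat, exists mu n0 : nat,
    forall (V : finType) (B : qbush V),
      is_qbush B -> symmetric_qbush B -> upwards_closed B ->
      no_coat_hangers B ->
      n0 <= #|leaves B| ->
      wcol_qbush B mu ^ mu <= #|leaves B| ->
      (forall w : V, #|IN B w| ^ mu <= #|leaves B| \/
                     #|OUT B w| ^ mu <= #|leaves B|) ->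
      wcol_GB B rho ^ rho <= #|leaves B|.
Proof.
move=> rho; exists (4 * rho).+1, (maxn 2 (4 ^ rho)).
move=> V B B_qbush _ B_uc B_nch n_large wcol_small in_out_small.
set mu := (4 * rho).+1; set n := #|leaves B|.
have root_nl := root_nleaf B_qbush (leq_trans (leq_maxl _ _) n_large).
pose S w := if #|IN B w| ^ mu <= n then IN B w else OUT B w.
have S_IN_OUT w : S w = IN B w \/ S w = OUT B w by rewrite /S; case: ifP; [left | right].
have S_small : (\max_w #|S w|) ^ mu <= n.
  elim/big_ind: _ => [| a b | w _]; first by rewrite exp0n.
    by rewrite /maxn; case: ifP.
  by rewrite /S; case: ifP => // IN_big; case: (in_out_small w); rewrite ?IN_big.
have [f f_inj wcol_f] := wcol_attained (gaif_edge B) mu.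
pose L x := nat_of_ord (f x).
have [r r_inj r_anchor] := exists_rank_le (fun x : leafT B => L (anchor S L x)).
have GB_le : wcol_GB B rho <= wcol_qbush B mu * (\max_w #|S w|).+1.
  apply: leq_trans (wcol_le_of_order _ _ r_inj) _; apply/bigmax_leqP => v _.
  apply: leq_trans
    (card_wreach_GB B_qbush B_uc B_nch root_nl S_IN_OUT (mu := mu) v _ r_anchor) _.
    by rewrite /mu -mul2n ltnS leq_mul2r orbT.
  by rewrite leq_mul2r /wcol_qbush wcol_f (leq_bigmax (val v)) orbT.
exact: leq_expn_mulS GB_le (leq_trans (leq_maxr _ _) n_large) wcol_small S_small.
Qed.
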